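(* The DSRT$_{\mathsf{A}}$-definable transformations are closed under intersection and composition, but not closed under union.
   Context: A linear group is a triple $\mathbf{G}=(D,\leq,+)$ where $D$ is an infinite set, $\leq$ is a total order on $D$, and $(D,+)$ is a group with identity $0$. For finite label sets $\Sigma,\Gamma$, a $(\Sigma,\Gamma,\mathbf{G})$-streaming register transducer (SRT) is a tuple $\mathcal{S}=(Q,q_0,k,R_0,\Delta)$: $Q$ finite set of states, $q_0\in Q$, $k\in\mathbb{N}$ registers, initial values $R_0\in D^k$, and transitions $\Delta\subseteq Q\times\Sigma\times\{>,=,<\}^k\times\{\mathsf{old},\mathsf{new},\mathsf{add}\}^k\times\{1,\dots,k\}\times\Gamma\times Q$. A transition $(q,\sigma,l,m,u,\gamma,q')$ enables the step $(q,R)\xrightarrow[(\gamma,d')]{(\sigma,d)}(q',R')$ iff (1) for every $i$, $d>R[i]$, $d=R[i]$ or $d<R[i]$ according as $l[i]$ is $>$, $=$, $<$; (2) $R'[i]=R[i]$, $d$, or $R[i]+d$ according as $m[i]$ is $\mathsf{old}$, $\mathsf{new}$, $\mathsf{add}$; (3) $d'=R'[u]$. A run over $s\in(\Sigma\times D)^*$ of length $n$ generating $t\in(\Gamma\times D)^*$ is a sequence of $n$ enabled steps from $(q_0,R_0)$ reading $s[i]$ and emitting $t[i]$. $s\otimes t$ is the word with $i$-th letter $(s[i],t[i])$; $[\![\mathcal{S}]\!]=\{s\otimes t:\text{there is a run over }s\text{ generating }t\}$. An SRT is deterministic if any two distinct transitions $(q_1,\sigma_1,l_1,\dots)$, $(q_2,\sigma_2,l_2,\dots)$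 satisfy $q_1\neq q_2$ or $\sigma_1\neq\sigma_2$ or $l_1\neq l_2$; it is add-free if all update vectors lie in $\{\mathsf{old},\mathsf{new}\}^k$. A DSRT$_{\mathsf{A}}$ is a deterministic add-free SRT; a transformation is DSRT$_{\mathsf{A}}$-definable if it equals $[\![\mathcal{S}]\!]$ for some DSRT$_{\mathsf{A}}$ $\mathcal{S}$. Union and intersection are taken for transducers of the same signature $(\Sigma,\Gamma,\mathbf{G})$. Composition: for $\mathcal{T}_1$ over $(\Sigma\times D)\times(\Gamma\times D)$ and $\mathcal{T}_2$ over $(\Gamma\times D)\times(\Theta\times D)$, $\mathcal{T}_1\cdot\mathcal{T}_2$ is the set of $s_1\otimes s_2$ ($s_1\in(\Sigma\times D)^*$, $s_2\in(\Theta\times D)^*$) such that some $s_3\in(\Gamma\times D)^*$ has $s_1\otimes s_3\in\mathcal{T}_1$ and $s_3\otimes s_2\in\mathcal{T}_2$. *)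

From mathcomp Require Import all_boot.
Set Implicit Arguments. Unset Strict Implicit. Unset Printing Implicit Defensive.

Record linear_group := LinearGroup {
  lg_D :> Type;
  lg_le : lg_D -> lg_D -> Prop;
  lg_add : lg_D -> lg_D -> lg_D;
  lg_zero : lg_D;
  lg_opp : lg_D -> lg_D;
  lg_infinite : forall l : seq lg_D, exists d, forall i, i < size l -> nth d l i <> d;
  lg_le_refl : forall x, lg_le x x;
  lg_le_trans : forall x y z, lg_le x y -> lg_le y z -> lg_le x z;
  lg_le_anti : forall x y, lg_le x y -> lg_le y x -> x = y;
  lg_le_total : forall x y, lg_le x y \/ lg_le y x;
  lg_addA : forall x y z, lg_add x (lg_add y z) = lg_add (lg_add x y) z;
  lg_add0l : forall x, lg_add lg_zero x = x;
  lg_add0r : forall x, lg_add x lg_zero = x;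
  lg_addNl : forall x, lg_add (lg_opp x) x = lg_zero;
  lg_addNr : forall x, lg_add x (lg_opp x) = lg_zero
}.

Definition lg_lt (G : linear_group) (x y : G) : Prop := lg_le x y /\ x <> y.

Inductive cmp := CGt | CEq | CLt.
Inductive upd := UOld | UNew | UAdd.

(** Transitions: Delta q sigma l m u gamma q' holds iff
    (q,sigma,l,m,u,gamma,q') is in the transition relation.
    Registers are indexed by 'I_k (i.e. 1..k shifted to 0..k-1). *)
Record srt (G : linear_group) (Sigma Gamma : Type) := SRT {
  srt_Q : finType;
  srt_q0 : srt_Q;
  srt_k : nat;
  srt_R0 : 'I_srt_k -> G;
  srt_Delta : srt_Q -> Sigma -> ('I_srt_k -> cmp) -> ('I_srt_k -> upd) ->
              'I_srt_k -> Gamma -> srt_Q -> Prop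
}.

Arguments srt_Delta {G Sigma Gamma} s _ _ _ _ _ _ _.
Arguments srt_q0 {G Sigma Gamma} s.
Arguments srt_R0 {G Sigma Gamma} s _.
Arguments srt_k {G Sigma Gamma} s.
Arguments srt_Q {G Sigma Gamma} s.

Section Semantics.
Variables (G : linear_group) (Sigma Gamma : Type) (S : srt G Sigma Gamma).

Definition guard_holds (c : cmp) (d r : G) : Prop :=
  match c with
  | CGt => lg_lt r d
  | CEq => d = r
  | CLt => lg_lt d r
  end.

Definition upd_val (u : upd) (r d : G) : G :=
  match u with
  | UOld => r
  | UNew => d
  | UAdd => lg_add r d
  end.

Definition step (q : srt_Q S) (R : 'I_(srt_k S) -> G)
    (inp : Sigma * G) (out : Gamma * G)
    (q' : srt_Q S) (R' : 'I_(srt_k S) -> G) : Prop :=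
  exists l m u,
    srt_Delta S q inp.1 l m u out.1 q' /\
    (forall i, guard_holds (l i) inp.2 (R i)) /\
    (forall i, R' i = upd_val (m i) (R i) inp.2) /\
    out.2 = R' u.

(** runs_from q R w : there is a run from (q,R) over the input word
    unzip1 w generating unzip2 w (w = s (x) t). *)
Fixpoint runs_from (q : srt_Q S) (R : 'I_(srt_k S) -> G)
    (w : seq ((Sigma * G) * (Gamma * G))) : Prop :=
  match w with
  | [::] => True
  | (inp, out) :: w' =>
      exists q' R', step q R inp out q' R' /\ runs_from q' R' w'
  end.

Definition sem (w : seq ((Sigma * G) * (Gamma * G))) : Prop :=
  runs_from (srt_q0 S) (srt_R0 S) w.

Definition deterministic : Prop :=
  forall q1 s1 l1 m1 u1 g1 p1 q2 s2 l2 m2 u2 g2 p2,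
    srt_Delta S q1 s1 l1 m1 u1 g1 p1 ->
    srt_Delta S q2 s2 l2 m2 u2 g2 p2 ->
    (q1, s1, l1, m1, u1, g1, p1) <> (q2, s2, l2, m2, u2, g2, p2) ->
    q1 <> q2 \/ s1 <> s2 \/ l1 <> l2.

Definition add_free : Prop :=
  forall q s l m u g p, srt_Delta S q s l m u g p -> forall i, m i <> UAdd.

Definition DSRT_A : Prop := deterministic /\ add_free.

End Semantics.

Definition transformation (G : linear_group) (Sigma Gamma : Type) :=
  seq ((Sigma * G) * (Gamma * G)) -> Prop.

Definition DSRT_A_definable (G : linear_group) (Sigma Gamma : finType)
    (T : transformation G Sigma Gamma) : Prop :=
  exists S : srt G Sigma Gamma, DSRT_A S /\ forall w, T w <-> sem S w.

Definition trans_union G Sigma Gamma (T1 T2 : transformation G Sigma Gamma)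
  : transformation G Sigma Gamma := fun w => T1 w \/ T2 w.

Definition trans_inter G Sigma Gamma (T1 T2 : transformation G Sigma Gamma)
  : transformation G Sigma Gamma := fun w => T1 w /\ T2 w.

Definition trans_comp G Sigma Gamma Theta
    (T1 : transformation G Sigma Gamma) (T2 : transformation G Gamma Theta)
  : transformation G Sigma Theta :=
  fun w => exists s3 : seq (Gamma * G), size s3 = size w /\
      T1 (zip (unzip1 w) s3) /\ T2 (zip s3 (unzip2 w)).

(* Two add-free deterministic transducers M1
   and M2 are run in lockstep by a single one with k1 + k2 + 1 registers.  Its
   finite control records in which register each register of M1 and M2 is
   stored, and the order type of all stored values.  An add-free update only
   keeps an old value or copies the input, so every comparison M1 or M2 makes
   (even against a value M1 just emitted) is decided by the guard on the input
   and the recorded order; and since the k1 + k2 new register contents come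
   from at most k1 + k2 old registers or the input, one register is always
   free to receive the input.  Determinism is inherited, and no update adds.

   The two one-letter words reading the same input but emitting the
   labels true and false cannot both be accepted by a deterministic
   transducer, whose first step is determined by its input. *)

From HB Require Import structures.
From mathcomp Require Import all_boot.
From Stdlib Require Import Classical ClassicalEpsilon FunctionalExtensionality.
Set Implicit Arguments. Unset Strict Implicit. Unset Printing Implicit Defensive.

Definition cmp_code (c : cmp) : option bool :=
  match c with CGt => Some true | CEq => None | CLt => Some false end.

Definition cmp_decode (o : option bool) : cmp :=
  match o with Some true => CGt | None => CEq | Some false => CLt end.

Lemma cmp_codeK : cancel cmp_code cmp_decode. Proof. by case. Qed.

HB.instance Definition _ := Finite.copy cmp (can_type cmp_codeK).

Section Comparisons.
Variable G : linear_group.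
Implicit Types (c : cmp) (x y d r : G).

Lemma lg_lt_irr x : ~ lg_lt x x.
Proof. by case. Qed.

Lemma lg_lt_asym x y : lg_lt x y -> ~ lg_lt y x.
Proof. by move=> [le_xy ne_xy] [le_yx _]; apply: ne_xy; apply: lg_le_anti. Qed.

Lemma guard_holds_uniq c c' d r :
  guard_holds c d r -> guard_holds c' d r -> c = c'.
Proof.
case: c; case: c' => //= h h';
  solve [ by case: (lg_lt_asym h h') | by subst; case: (lg_lt_irr h)
        | by subst; case: (lg_lt_irr h') ].
Qed.

Lemma guard_holds_total d r : exists c, guard_holds c d r.
Proof.
case: (classic (d = r)) => [eq_dr | ne_dr]; first by exists CEq.
case: (lg_le_total d r) => [le_dr | le_rd].
  by exists CLt; split.
by exists CGt; split=> // eq_rd; apply: ne_dr.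
Qed.

Definition cmp_of d r : cmp :=
  proj1_sig (constructive_indefinite_description _ (guard_holds_total d r)).

Lemma cmp_ofP d r : guard_holds (cmp_of d r) d r.
Proof. by rewrite /cmp_of; case: constructive_indefinite_description. Qed.

Definition cmp_flip c : cmp :=
  match c with CGt => CLt | CEq => CEq | CLt => CGt end.

Lemma guard_holds_flip c d r : guard_holds c d r -> guard_holds (cmp_flip c) r d.
Proof. by case: c => //= ->. Qed.

Lemma guard_holds_eq c x y : guard_holds c x y -> (c = CEq <-> x = y).
Proof. by case: c => /= h; split=> // eq_xy; subst; case: (lg_lt_irr h). Qed.

End Comparisons.

Section Determinism.
Variables (G : linear_group) (Sig Gam : Type) (S : srt G Sig Gam).

Lemma deterministicP : deterministic S <->
  (forall q s l m u g q' m' u' g' q'',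
     srt_Delta S q s l m u g q' -> srt_Delta S q s l m' u' g' q'' ->
     (m, u, g, q') = (m', u', g', q'')).
Proof.
split=> [detS q s l m u g q' m' u' g' q'' D D' | uniqS].
  case: (classic ((q, s, l, m, u, g, q') = (q, s, l, m', u', g', q''))).
    by case=> *; subst.
  by move=> ne; case: (detS _ _ _ _ _ _ _ _ _ _ _ _ _ _ D D' ne) => [|[]].
move=> q1 s1 l1 m1 u1 g1 p1 q2 s2 l2 m2 u2 g2 p2 D1 D2 ne.
case: (classic (q1 = q2)) => [eq_q|]; last by left.
case: (classic (s1 = s2)) => [eq_s|]; last by right; left.
case: (classic (l1 = l2)) => [eq_l|]; last by right; right.
subst; case: ne; by case: (uniqS _ _ _ _ _ _ _ _ _ _ _ D1 D2) => *; subst.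
Qed.

Lemma det_step_uniq q R inp out q' R' out' q'' R'' : deterministic S ->
  step (S:=S) q R inp out q' R' -> step (S:=S) q R inp out' q'' R'' ->
  [/\ out = out', q' = q'' & R' =1 R''].
Proof.
move=> /deterministicP uniqS [l [m [u [D [Hl [HR' Hout]]]]]].
move=> [l' [m' [u' [D' [Hl' [HR'' Hout']]]]]].
have eq_l : l = l'.
  by apply: functional_extensionality => i; apply: guard_holds_uniq (Hl i) (Hl' i).
subst l'; case: (uniqS _ _ _ _ _ _ _ _ _ _ _ D D') => ? ? eq_g ?; subst m' u' q''.
have eq_R : R' =1 R'' by move=> i; rewrite HR' HR''.
split=> //; case: out out' Hout Hout' eq_g {D D'} => [g e] [g' e'] /= -> -> ->.
by rewrite eq_R.
Qed.

End Determinism.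

Lemma exists_fresh (T U : finType) (src : T -> option U) :
  #|T| < #|U| -> exists a, forall t, src t != Some a.
Proof.
move=> ltTU; apply: NNPP => no_fresh.
have hit a : exists t, src t == Some a.
  apply: NNPP => miss; apply: no_fresh; exists a => t.
  by apply/negP => hit_t; apply: miss; exists t.
pose pre a := xchoose (hit a).
have pre_inj : injective pre.
  move=> a b eq_ab; apply: Some_inj.
  by rewrite -(eqP (xchooseP (hit a))) -(eqP (xchooseP (hit b))) [xchoose _]eq_ab.
by have := leq_card pre pre_inj; rewrite leqNgt ltTU.
Qed.

Section Cascade.
Variables (G : linear_group) (Sig Gam1 Sig2 Gam2 : Type).
Variables (M1 : srt G Sig Gam1) (M2 : srt G Sig2 Gam2).
Variables (feed : Sig -> Gam1 -> Sig2) (piped sync : bool).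
Variable agree : Gam1 -> Gam2 -> Prop.

Local Notation Q1 := (srt_Q M1).
Local Notation Q2 := (srt_Q M2).
Local Notation k1 := (srt_k M1).
Local Notation k2 := (srt_k M2).
Local Notation K := (srt_k M1 + srt_k M2).+1.

(* One cascade covers both constructions: composition pipes M1's output into
   M2, intersection feeds M2 the input and synchronises the two outputs. *)
Definition cascade_step (q1 : Q1) (R1 : 'I_k1 -> G) (q2 : Q2) (R2 : 'I_k2 -> G)
    (inp : Sig * G) (out : Gam2 * G)
    (q1' : Q1) (R1' : 'I_k1 -> G) (q2' : Q2) (R2' : 'I_k2 -> G) : Prop :=
  exists g1 d1, [/\ step (S:=M1) q1 R1 inp (g1, d1) q1' R1',
    step (S:=M2) q2 R2 (feed inp.1 g1, if piped then d1 else inp.2) out q2' R2',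
    agree g1 out.1 & (sync -> d1 = out.2)].

Fixpoint cascade_runs (q1 : Q1) (R1 : 'I_k1 -> G) (q2 : Q2) (R2 : 'I_k2 -> G)
    (w : seq ((Sig * G) * (Gam2 * G))) : Prop :=
  match w with
  | [::] => True
  | (inp, out) :: w' => exists q1' R1' q2' R2',
      cascade_step q1 R1 q2 R2 inp out q1' R1' q2' R2' /\
      cascade_runs q1' R1' q2' R2' w'
  end.

(* A state records the states of M1 and M2, the registers [p1 i] and [p2 j]
   holding the simulated registers, and the comparison of any two registers. *)
Definition cstate : finType :=
  (Q1 * Q2 * {ffun 'I_k1 -> 'I_K} * {ffun 'I_k2 -> 'I_K}
   * {ffun 'I_K * 'I_K -> cmp})%type.

(* The value of a register after a step comes from [Some] old register or from
   the input value ([None]). *)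
Definition src_val (P : 'I_K -> G) (d : G) (o : option 'I_K) : G :=
  if o is Some a then P a else d.

Definition src_cmp (ord : {ffun 'I_K * 'I_K -> cmp}) (l : 'I_K -> cmp)
    (o o' : option 'I_K) : cmp :=
  match o, o' with
  | None, None => CEq
  | None, Some b => l b
  | Some a, None => cmp_flip (l a)
  | Some a, Some b => ord (a, b)
  end.

Definition records_order (ord : {ffun 'I_K * 'I_K -> cmp}) (P : 'I_K -> G) :=
  forall a b, guard_holds (ord (a, b)) (P a) (P b).

Lemma src_cmpP ord l P d :
  records_order ord P -> (forall a, guard_holds (l a) d (P a)) ->
  forall o o', guard_holds (src_cmp ord l o o') (src_val P d o) (src_val P d o').
Proof. by move=> Hord Hl [a|] [b|] //=; apply: guard_holds_flip. Qed.

Section Sources.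
Variables (p1 : {ffun 'I_k1 -> 'I_K}) (p2 : {ffun 'I_k2 -> 'I_K}).
Variables (m1 : 'I_k1 -> upd) (u1 : 'I_k1) (m2 : 'I_k2 -> upd).

Definition src1 (i : 'I_k1) : option 'I_K :=
  if m1 i is UNew then None else Some (p1 i).

Definition src_in2 : option 'I_K := if piped then src1 u1 else None.

Definition src2 (j : 'I_k2) : option 'I_K :=
  if m2 j is UNew then src_in2 else Some (p2 j).

Definition src_new (r : 'I_k1 + 'I_k2) : option 'I_K :=
  match r with inl i => src1 i | inr j => src2 j end.

(* The default [ord0] is never used, by [freshP]. *)
Definition fresh : 'I_K := odflt ord0 [pick a | [forall r, src_new r != Some a]].

Lemma freshP r : src_new r != Some fresh.
Proof.
rewrite /fresh; case: pickP => [a /forallP // | none].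
have [a fresh_a] : exists a, forall r, src_new r != Some a.
  by apply: exists_fresh; rewrite card_sum !card_ord.
by move: (none a); rewrite (introT forallP fresh_a).
Qed.

Lemma src1_fresh i : src1 i != Some fresh.
Proof. exact: (freshP (inl i)). Qed.

Lemma src2_fresh j : src2 j != Some fresh.
Proof. exact: (freshP (inr j)). Qed.

End Sources.

Definition reg_src (a0 a : 'I_K) : option 'I_K := if a == a0 then None else Some a.

Definition cascade_update p1 p2 ord (l : 'I_K -> cmp) m1 u1 m2 (u2 : 'I_k2)
    (q1' : Q1) (q2' : Q2) : ('I_K -> upd) * 'I_K * cstate :=
  let a0 := fresh p1 p2 m1 u1 m2 in
  ((fun a => if a == a0 then UNew else UOld),
   odflt a0 (src2 p1 p2 m1 u1 m2 u2),
   (q1', q2', [ffun i => odflt a0 (src1 p1 m1 i)],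
    [ffun j => odflt a0 (src2 p1 p2 m1 u1 m2 j)],
    [ffun ab => src_cmp ord l (reg_src a0 ab.1) (reg_src a0 ab.2)])).

Definition cascade_Delta (st : cstate) (s : Sig) (l : 'I_K -> cmp)
    (m : 'I_K -> upd) (u : 'I_K) (g : Gam2) (st' : cstate) : Prop :=
  let: (q1, q2, p1, p2, ord) := st in
  exists m1 u1 g1 q1' m2 u2 q2', [/\
    srt_Delta M1 q1 s (l \o p1) m1 u1 g1 q1',
    srt_Delta M2 q2 (feed s g1)
      (fun j => src_cmp ord l (src_in2 p1 m1 u1) (Some (p2 j))) m2 u2 g q2',
    agree g1 g,
    sync -> src_cmp ord l (src1 p1 m1 u1) (src2 p1 p2 m1 u1 m2 u2) = CEq &
    (m, u, st') = cascade_update p1 p2 ord l m1 u1 m2 u2 q1' q2'].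

Definition init_val (a : 'I_K) : G :=
  if unlift ord_max a is Some b then
    match split b with inl i => srt_R0 M1 i | inr j => srt_R0 M2 j end
  else lg_zero G.

Definition cascade_q0 : cstate :=
  (srt_q0 M1, srt_q0 M2, [ffun i => lift ord_max (lshift k2 i)],
   [ffun j => lift ord_max (rshift k1 j)],
   [ffun ab => cmp_of (init_val ab.1) (init_val ab.2)]).

Definition cascade_srt : srt G Sig Gam2 :=
  @SRT G Sig Gam2 cstate cascade_q0 K init_val cascade_Delta.

Lemma cascade_DSRT_A : DSRT_A M1 -> DSRT_A M2 -> DSRT_A cascade_srt.
Proof.
move=> [/deterministicP det1 _] [/deterministicP det2 _]; split.
  apply/deterministicP => [[[[[q1 q2] p1] p2] ord]] s l m u g st' m' u' g' st''.
  move=> [m1 [u1 [g1 [q1' [m2 [u2 [q2' [D1 D2 _ _ upd]]]]]]]].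
  move=> [m1' [u1' [g1' [q1'' [m2' [u2' [q2'' [D1' D2' _ _ upd']]]]]]]].
  case: (det1 _ _ _ _ _ _ _ _ _ _ _ D1 D1') => ? ? ? ?; subst.
  case: (det2 _ _ _ _ _ _ _ _ _ _ _ D2 D2') => ? ? ? ?; subst.
  by case: upd => -> -> ->; case: upd' => -> -> ->.
move=> [[[[q1 q2] p1] p2] ord] s l m u g st'.
by move=> [m1 [u1 [g1 [q1' [m2 [u2 [q2' [_ _ _ _ [-> _ _]]]]]]]]] a /=; case: ifP.
Qed.

Definition represents (st : cstate) (P : 'I_K -> G)
    (q1 : Q1) (R1 : 'I_k1 -> G) (q2 : Q2) (R2 : 'I_k2 -> G) : Prop :=
  let: (q1s, q2s, p1, p2, ord) := st in
  [/\ q1s = q1, q2s = q2, R1 =1 P \o p1, R2 =1 P \o p2 & records_order ord P].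

Lemma represents_init :
  represents cascade_q0 init_val (srt_q0 M1) (srt_R0 M1) (srt_q0 M2) (srt_R0 M2).
Proof.
split=> // [i | j | a b] /=; rewrite ?ffunE /init_val ?liftK.
- by rewrite (unsplitK (inl i : 'I_k1 + 'I_k2)).
- by rewrite (unsplitK (inr j : 'I_k1 + 'I_k2)).
- exact: cmp_ofP.
Qed.

Section Simulation.
Hypotheses (af1 : add_free M1) (af2 : add_free M2).

Section Update.
Variables (P : 'I_K -> G) (p1 : {ffun 'I_k1 -> 'I_K}) (p2 : {ffun 'I_k2 -> 'I_K}).
Variables (ord : {ffun 'I_K * 'I_K -> cmp}) (R1 : 'I_k1 -> G) (R2 : 'I_k2 -> G).
Hypotheses (HR1 : R1 =1 P \o p1) (HR2 : R2 =1 P \o p2) (Hord : records_order ord P).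
Variables (d : G) (l : 'I_K -> cmp).
Hypothesis Hl : forall a, guard_holds (l a) d (P a).
Variables (m1 : 'I_k1 -> upd) (u1 : 'I_k1) (m2 : 'I_k2 -> upd).
Hypotheses (Hm1 : forall i, m1 i <> UAdd) (Hm2 : forall j, m2 j <> UAdd).

Local Notation d2 := (if piped then upd_val (m1 u1) (R1 u1) d else d).
Local Notation a0 := (fresh p1 p2 m1 u1 m2).

Lemma src1_val i : upd_val (m1 i) (R1 i) d = src_val P d (src1 p1 m1 i).
Proof. by rewrite /src1 HR1; move: (@Hm1 i); case: (m1 i). Qed.

Lemma src_in2_val : d2 = src_val P d (src_in2 p1 m1 u1).
Proof. by rewrite /src_in2; case: piped; rewrite ?src1_val. Qed.

Lemma src2_val j : upd_val (m2 j) (R2 j) d2 = src_val P d (src2 p1 p2 m1 u1 m2 j).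
Proof. by rewrite /src2 HR2 src_in2_val; move: (@Hm2 j); case: (m2 j). Qed.

Lemma guard2_holds j :
  guard_holds (src_cmp ord l (src_in2 p1 m1 u1) (Some (p2 j))) d2 (R2 j).
Proof. by rewrite src_in2_val HR2; apply: src_cmpP. Qed.

Lemma sync_check u2 :
  src_cmp ord l (src1 p1 m1 u1) (src2 p1 p2 m1 u1 m2 u2) = CEq <->
  upd_val (m1 u1) (R1 u1) d = upd_val (m2 u2) (R2 u2) d2.
Proof. by rewrite src2_val src1_val; apply/guard_holds_eq/src_cmpP. Qed.

Local Notation P' := (fun a => upd_val (if a == a0 then UNew else UOld) (P a) d).

Lemma reg_src_val a : P' a = src_val P d (reg_src a0 a).
Proof. by rewrite /reg_src; case: ifP. Qed.

Lemma fresh_val o : o != Some a0 -> P' (odflt a0 o) = src_val P d o.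
Proof.
case: o => [a|] /= fresh_o; rewrite ?eqxx //.
by case: ifP fresh_o => // /eqP ->; rewrite eqxx.
Qed.

Lemma update_represents u2 q1' q2' m u st' :
  (m, u, st') = cascade_update p1 p2 ord l m1 u1 m2 u2 q1' q2' ->
  represents st' (fun a => upd_val (m a) (P a) d)
    q1' (fun i => upd_val (m1 i) (R1 i) d) q2' (fun j => upd_val (m2 j) (R2 j) d2) /\
  upd_val (m u) (P u) d = upd_val (m2 u2) (R2 u2) d2.
Proof.
case=> -> -> ->; split; first split=> // [i | j | a b] /=; rewrite ?ffunE.
- by rewrite src1_val fresh_val ?src1_fresh.
- by rewrite src2_val fresh_val ?src2_fresh.
- by rewrite !reg_src_val; apply: src_cmpP.
- by rewrite src2_val fresh_val ?src2_fresh.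
Qed.

End Update.

Lemma cascade_step_sound st P q1 R1 q2 R2 inp out st' P' :
  represents st P q1 R1 q2 R2 -> step (S:=cascade_srt) st P inp out st' P' ->
  exists q1' R1' q2' R2', cascade_step q1 R1 q2 R2 inp out q1' R1' q2' R2' /\
                          represents st' P' q1' R1' q2' R2'.
Proof.
case: st => [[[[q1s q2s] p1] p2] ord] [<- <- HR1 HR2 Hord].
case: inp out => [s d] [g e]; rewrite /step /= => -[l [m [u [D [Hl [HP' He]]]]]].
have eq_P' : P' = fun a => upd_val (m a) (P a) d.
  exact: functional_extensionality.
subst P'.
case: D => m1 [u1 [g1 [q1' [m2 [u2 [q2' [D1 D2 Hagree Hsync Hupd]]]]]]].
have [Hrep Hout] := update_represents HR1 HR2 Hord Hl (af1 D1) (af2 D2) Hupd.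
do 4 eexists; split; last exact: Hrep.
exists g1, (upd_val (m1 u1) (R1 u1) d); split=> //.
- exists (l \o p1), m1, u1; split=> //; split=> // i.
  by rewrite HR1; apply: Hl.
- exists (fun j => src_cmp ord l (src_in2 p1 m1 u1) (Some (p2 j))), m2, u2.
  split=> //=; split.
    by move=> j; apply: (guard2_holds HR1 HR2 Hord Hl u1 (af1 D1) j).
  by split=> //=; rewrite -Hout He.
- by move=> /Hsync /(sync_check HR1 HR2 Hord Hl u1 (af1 D1) (af2 D2)); rewrite -Hout He.
Qed.

Lemma cascade_step_complete st P q1 R1 q2 R2 inp out q1' R1' q2' R2' :
  represents st P q1 R1 q2 R2 -> cascade_step q1 R1 q2 R2 inp out q1' R1' q2' R2' ->
  exists st' P', step (S:=cascade_srt) st P inp out st' P' /\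
                 represents st' P' q1' R1' q2' R2'.
Proof.
case: st => [[[[q1s q2s] p1] p2] ord] [<- <- HR1 HR2 Hord].
case: inp out => [s d] [g e] [g1 [d1 [step1 step2 Hagree Hsync]]] /=.
case: step1 => l1 [m1 [u1 [D1 [Hl1 [HR1' Hd1]]]]].
case: step2 => l2 [m2 [u2 [D2 [Hl2 [HR2' He]]]]].
have eq_R1' : R1' = fun i => upd_val (m1 i) (R1 i) d.
  exact: functional_extensionality.
have eq_R2' : R2' = fun j => upd_val (m2 j) (R2 j) (if piped then d1 else d).
  exact: functional_extensionality.
subst R1' R2'.
rewrite /= in Hd1 He Hl2 D2; subst d1.
pose l a := cmp_of d (P a).
have Hl a : guard_holds (l a) d (P a) by exact: cmp_ofP.
have Hm1 := af1 D1; have Hm2 := af2 D2.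
have eq_l1 : l1 = l \o p1.
  apply: functional_extensionality => i; apply: guard_holds_uniq (Hl1 i) _.
  by rewrite HR1; apply: Hl.
have eq_l2 : l2 = fun j => src_cmp ord l (src_in2 p1 m1 u1) (Some (p2 j)).
  apply: functional_extensionality => j; apply: guard_holds_uniq (Hl2 j) _.
  exact: guard2_holds.
subst l1 l2.
case E: (cascade_update p1 p2 ord l m1 u1 m2 u2 q1' q2') => [[m u] st'].
have [Hrep Hout] := update_represents HR1 HR2 Hord Hl Hm1 Hm2 (esym E).
exists st', (fun a => upd_val (m a) (P a) d); split=> //.
exists l, m, u; split; last by split=> //; split=> //=; rewrite Hout He.
exists m1, u1, g1, q1', m2, u2, q2'; split=> // /Hsync /= d1_e.
by apply/(sync_check HR1 HR2 Hord Hl u1 Hm1 Hm2); rewrite -He.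
Qed.

Lemma cascade_runs_equiv w : forall st P q1 R1 q2 R2,
  represents st P q1 R1 q2 R2 ->
  runs_from (S:=cascade_srt) st P w <-> cascade_runs q1 R1 q2 R2 w.
Proof.
elim: w => [|[inp out] w IHw] st P q1 R1 q2 R2 Hrep //=; split.
- move=> [st' [P' [Hstep Hruns]]].
  have [q1' [R1' [q2' [R2' [Hcas Hrep']]]]] := cascade_step_sound Hrep Hstep.
  by exists q1', R1', q2', R2'; split=> //; apply/(IHw _ _ _ _ _ _ Hrep').
- move=> [q1' [R1' [q2' [R2' [Hcas Hruns]]]]].
  have [st' [P' [Hstep Hrep']]] := cascade_step_complete Hrep Hcas.
  by exists st', P'; split=> //; apply/(IHw _ _ _ _ _ _ Hrep').
Qed.

Lemma sem_cascade w :
  sem cascade_srt w <-> cascade_runs (srt_q0 M1) (srt_R0 M1) (srt_q0 M2) (srt_R0 M2) w.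
Proof. exact: cascade_runs_equiv represents_init. Qed.

End Simulation.
End Cascade.

Section Instances.
Variable G : linear_group.

Lemma cascade_runs_inter (Sig Gam : Type) (M1 M2 : srt G Sig Gam) w :
  forall (q1 : srt_Q M1) R1 (q2 : srt_Q M2) R2,
  cascade_runs (fun s _ => s) false true eq q1 R1 q2 R2 w <->
  runs_from q1 R1 w /\ runs_from q2 R2 w.
Proof.
elim: w => [|[[s d] [g e]] w IHw] q1 R1 q2 R2 //=; split.
- move=> [q1' [R1' [q2' [R2' [[g1 [d1 [step1 step2 eq_g /(_ erefl) eq_d]]] runs']]]]].
  rewrite /= in eq_g eq_d; subst g1 d1.
  have [runs1 runs2] := (IHw _ _ _ _).1 runs'.
  by split; [exists q1', R1' | exists q2', R2'].
- move=> [[q1' [R1' [step1 runs1]]] [q2' [R2' [step2 runs2]]]].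
  exists q1', R1', q2', R2'; split; last exact/IHw.
  by exists g, e.
Qed.

Lemma cascade_runs_comp (Sig Gam Th : Type) (M1 : srt G Sig Gam)
    (M2 : srt G Gam Th) w :
  forall (q1 : srt_Q M1) R1 (q2 : srt_Q M2) R2,
  cascade_runs (fun _ g => g) true false (fun _ _ => True) q1 R1 q2 R2 w <->
  exists s3 : seq (Gam * G), size s3 = size w /\
    runs_from q1 R1 (zip (unzip1 w) s3) /\ runs_from q2 R2 (zip s3 (unzip2 w)).
Proof.
elim: w => [|[[s d] [g e]] w IHw] q1 R1 q2 R2 /=.
  by split=> // _; exists [::].
split.
- move=> [q1' [R1' [q2' [R2' [[g1 [d1 [step1 step2 _ _]]] runs']]]]].
  have [s3 [size_s3 [runs1 runs2]]] := (IHw _ _ _ _).1 runs'.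
  exists ((g1, d1) :: s3); split; first by rewrite /= size_s3.
  by split; [exists q1', R1' | exists q2', R2'].
- move=> [[|[g1 d1] s3] [//= [size_s3] [run1 run2]]].
  case: run1 run2 => [q1' [R1' [step1 runs1]]] [q2' [R2' [step2 runs2]]].
  exists q1', R1', q2', R2'; split; first by exists g1, d1.
  by apply/IHw; exists s3.
Qed.

Definition const_srt (b : bool) : srt G unit bool :=
  @SRT G unit bool unit tt 1 (fun _ => lg_zero G)
    (fun _ _ _ m _ g _ => m = (fun _ => UNew) /\ g = b).

Lemma const_srt_DSRT_A b : DSRT_A (const_srt b).
Proof.
split; last by move=> q s l m u g p [-> _] i.
apply/deterministicP => q s l m u g q' m' u' g' q'' [-> ->] [-> ->].
by rewrite (ord1 u) (ord1 u'); case: q'; case: q''.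
Qed.

Lemma sem_const_srt b : sem (const_srt b) [:: ((tt, lg_zero G), (b, lg_zero G))].
Proof.
exists tt, (fun _ => lg_zero G); split=> //.
by exists (fun _ => CEq), (fun _ => UNew), ord0.
Qed.

Lemma const_srt_union_not_DSRT_A_definable :
  ~ DSRT_A_definable (trans_union (sem (const_srt true)) (sem (const_srt false))).
Proof.
move=> [S [[detS _] semS]].
have [q1 [R1 [step1 _]]] := (semS _).1 (or_introl (sem_const_srt true)).
have [q2 [R2 [step2 _]]] := (semS _).1 (or_intror (sem_const_srt false)).
by case: (det_step_uniq detS step1 step2).
Qed.

Lemma DSRT_A_definable_inter (Sig Gam : finType) (T1 T2 : transformation G Sig Gam) :
  DSRT_A_definable T1 -> DSRT_A_definable T2 -> DSRT_A_definable (trans_inter T1 T2).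
Proof.
move=> [S1 [DS1 semS1]] [S2 [DS2 semS2]].
exists (cascade_srt S1 S2 (fun s _ => s) false true eq).
split=> [|w]; first exact: cascade_DSRT_A.
case: DS1 DS2 => [_ af1] [_ af2].
by rewrite /trans_inter semS1 semS2 sem_cascade // cascade_runs_inter.
Qed.

Lemma DSRT_A_definable_comp (Sig Gam Th : finType)
    (T1 : transformation G Sig Gam) (T2 : transformation G Gam Th) :
  DSRT_A_definable T1 -> DSRT_A_definable T2 -> DSRT_A_definable (trans_comp T1 T2).
Proof.
move=> [S1 [DS1 semS1]] [S2 [DS2 semS2]].
exists (cascade_srt S1 S2 (fun _ g => g) true false (fun _ _ => True)).
split=> [|w]; first exact: cascade_DSRT_A.
case: DS1 DS2 => [_ af1] [_ af2].
rewrite sem_cascade // cascade_runs_comp; split.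
- by move=> [s3 [size_s3 [/semS1 runs1 /semS2 runs2]]]; exists s3.
- by move=> [s3 [size_s3 [/semS1 runs1 /semS2 runs2]]]; exists s3.
Qed.

End Instances.

Theorem theorem3p22 :
  (* closed under intersection *)
  (forall (G : linear_group) (Sigma Gamma : finType)
          (T1 T2 : transformation G Sigma Gamma),
      DSRT_A_definable T1 -> DSRT_A_definable T2 ->
      DSRT_A_definable (trans_inter T1 T2)) /\
  (* closed under composition *)
  (forall (G : linear_group) (Sigma Gamma Theta : finType)
          (T1 : transformation G Sigma Gamma)
          (T2 : transformation G Gamma Theta),
      DSRT_A_definable T1 -> DSRT_A_definable T2 ->
      DSRT_A_definable (trans_comp T1 T2)) /\
  (* not closed under union *)
  (forall G : linear_group, exists (Sigma Gamma : finType)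
          (T1 T2 : transformation G Sigma Gamma),
      DSRT_A_definable T1 /\ DSRT_A_definable T2 /\
      ~ DSRT_A_definable (trans_union T1 T2)).
Proof.
split; [exact: DSRT_A_definable_inter | split; first exact: DSRT_A_definable_comp].
move=> G; exists unit, bool, (sem (const_srt G true)), (sem (const_srt G false)).
split; first by exists (const_srt G true); split; [exact: const_srt_DSRT_A |].
split; first by exists (const_srt G false); split; [exact: const_srt_DSRT_A |].
exact: const_srt_union_not_DSRT_A_definable.
Qed.
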